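(* Let $d\ge k\ge 0$ be integers. Then $\frac{k+1}{d+k+1}\le f(k,d)\le \frac{k+1}{d+1}$.
   Context: For a graph $G=(V,E)$ and an integer $k\ge 0$, a $k$-independent set is a set $S\subseteq V$ such that the induced subgraph $G[S]$ has maximum degree at most $k$; $\alpha_k(G)$ denotes the maximum cardinality of a $k$-independent set of $G$. $n(G)$ is the number of vertices and $d(G)=2|E(G)|/n(G)$ the average degree. For integers $d,k\ge 0$, $f(k,d)=\inf\left\{\frac{\alpha_k(G)}{n(G)} : G \text{ a finite simple graph with at least one vertex and } d(G)\le d\right\}$. *)

From Stdlib Require Import Reals.
From mathcomp Require Import all_boot.
Set Implicit Arguments. Unset Strict Implicit. Unset Printing Implicit Defensive.

Definition simple_graph (T : finType) (e : rel T) : Prop :=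
  symmetric e /\ irreflexive e.

Definition edges (T : finType) (e : rel T) : {set {set T}} :=
  [set A : {set T} | [exists x : T, exists y : T, (A == [set x; y]) && e x y]].

Definition k_independent (T : finType) (e : rel T) (k : nat) (S : {set T}) : bool :=
  [forall x in S, #|[set y in S | e x y]| <= k].

Definition alpha_k (T : finType) (e : rel T) (k : nat) : nat :=
  \max_(S : {set T} | k_independent e k S) #|S|.

Local Open Scope R_scope.

Definition nverts (T : finType) : nat := #|T|.
Definition avg_degree (T : finType) (e : rel T) : R :=
  2 * INR #|edges e| / INR (nverts T).

Definition ratio_set (k d : nat) (r : R) : Prop :=
  exists (T : finType) (e : rel T),
    simple_graph e /\ (0 < nverts T)%N /\ avg_degree e <= INR d /\
    r = INR (alpha_k e k) / INR (nverts T).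

Definition is_inf (S : R -> Prop) (r : R) : Prop :=
  (forall x, S x -> r <= x) /\
  (forall l, (forall x, S x -> l <= x) -> l <= r).

Definition f_is (k d : nat) (r : R) : Prop := is_inf (ratio_set k d) r.

(* Upper bound: the complete graph K_(d+1) has average degree d and
   alpha_k(K_(d+1)) = k+1, so its ratio (k+1)/(d+1) lies in the set.

   Lower bound (graph part, with c = k+1, a = alpha_k(G)):
   - a set minimising  deg_sum(S) + 2c|U\S| + |S|  over S ⊆ U is k-independent
     and every vertex of U\S has at least c neighbours in it;
   - peeling such sets off (Lovasz) gives: if every degree in G[U] is < p*c
     then U contains a k-independent set of size >= |U|/p;
   - deleting the vertices of degree >= (L+1)c one by one and applying the
     previous fact to the rest yields by induction on L the layering bound
         2cL|U| <= c a L(L+1) + deg_sum(U);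
   - for U = V, deg_sum(V) = 2|E| <= dn (handshake), and the choice
     L = d/c + 1 (so that d < cL <= d+c) turns it into  c n <= a (d+c). *)

From Stdlib Require Import Reals Lra.
From mathcomp Require Import all_boot zify.
Set Implicit Arguments. Unset Strict Implicit. Unset Printing Implicit Defensive.

Section DegreeSums.
Variables (T : finType) (e : rel T).

Definition deg_in (U : {set T}) (v : T) : nat := #|[set y in U | e v y]|.

Definition deg_sum (U : {set T}) : nat := \sum_(v in U) deg_in U v.

Lemma sum_indicator (A : {set T}) (b : pred T) :
  \sum_(w in A) (b w : nat) = #|[set w in A | b w]|.
Proof.
by rewrite -sum1dep_card big_mkcondr /=; apply: eq_bigr => w _; case: (b w).
Qed.

Lemma deg_in_setD1 (U : {set T}) (v w : T) :
  deg_in U w = deg_in (U :\ v) w + ((v \in U) && e w v).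
Proof.
rewrite /deg_in (cardsD1 v [set y in U | e w y]) inE addnC; congr (_ + _).
by apply: eq_card => y; rewrite !inE; case: (y == v); rewrite ?andbF ?andbT.
Qed.

Lemma deg_in_split (U S : {set T}) (w : T) :
  S \subset U -> deg_in U w = deg_in S w + deg_in (U :\: S) w.
Proof.
move=> SU; rewrite /deg_in -(cardsID S [set y in U | e w y]).
congr (_ + _); apply: eq_card => y; rewrite !inE.
- by case yS: (y \in S); rewrite ?andbF //= (subsetP SU y yS) andbT.
- by case: (y \in S); case: (y \in U); case: (e w y).
Qed.

Hypotheses (e_sym : symmetric e) (e_irr : irreflexive e).

Lemma deg_sum_setD1 (U : {set T}) (v : T) :
  v \in U -> deg_sum U = deg_sum (U :\ v) + 2 * deg_in U v.
Proof.
move=> vU; rewrite /deg_sum (big_setD1 v vU) /=.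
under eq_bigr => w _ do rewrite (deg_in_setD1 U v w).
rewrite big_split /= sum_indicator.
have -> : #|[set w in U :\ v | (v \in U) && e w v]| = deg_in U v.
  apply: eq_card => y; rewrite !inE vU /= e_sym.
  by case: (eqVneq y v) => [-> | _] /=; rewrite ?e_irr ?andbF.
lia.
Qed.

Lemma edge_ordered_pairs (x y : T) : e x y ->
  #|[set p : T * T | e p.1 p.2 && ([set p.1; p.2] == [set x; y])]| = 2.
Proof.
move=> exy; have xy : x != y by apply: contraTneq exy => ->; rewrite e_irr.
have -> : [set p : T * T | e p.1 p.2 && ([set p.1; p.2] == [set x; y])]
          = [set (x, y); (y, x)].
  apply/setP => -[a b]; rewrite !inE /=; apply/idP/idP.
  - move=> /andP [eab /eqP E].
    have ab : a != b by apply: contraTneq eab => ->; rewrite e_irr.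
    have : a \in [set x; y] by rewrite -E !inE eqxx.
    have : b \in [set x; y] by rewrite -E !inE eqxx orbT.
    move: ab; rewrite !inE => ab /orP [] /eqP Eb /orP [] /eqP Ea; subst a b.
    + by rewrite eqxx in ab.
    + by rewrite eqxx orbT.
    + by rewrite eqxx.
    + by rewrite eqxx in ab.
  - case/orP => /eqP [-> ->]; first by rewrite exy eqxx.
    by rewrite e_sym exy setUC eqxx.
by rewrite cards2; case: eqP => // -[E _]; rewrite E eqxx in xy.
Qed.

Lemma handshake : deg_sum setT = 2 * #|edges e|.
Proof.
have -> : deg_sum setT = #|[set p : T * T | e p.1 p.2]|.
  rewrite /deg_sum /deg_in -sum1dep_card.
  under eq_bigr => x _ do rewrite -sum1dep_card.
  by rewrite pair_big_dep; apply: eq_bigl => p; rewrite !in_setT.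
rewrite -sum1dep_card.
rewrite (partition_big (fun p : T * T => [set p.1; p.2]) (fun A => A \in edges e)); last first.
  move=> p ep; rewrite /edges inE; apply/existsP; exists p.1; apply/existsP; exists p.2.
  by rewrite eqxx ep.
rewrite mulnC -sum_nat_const; apply: eq_bigr => A.
rewrite /edges inE => /existsP [x /existsP [y /andP [/eqP -> exy]]].
by rewrite sum1dep_card edge_ordered_pairs.
Qed.
End DegreeSums.

Section IndependentSets.
Variables (T : finType) (e : rel T) (k : nat).
Hypotheses (e_sym : symmetric e) (e_irr : irreflexive e).

Lemma k_independentP (S : {set T}) :
  reflect (forall x, x \in S -> deg_in e S x <= k) (k_independent e k S).
Proof. exact: (iffP forall_inP). Qed.

Lemma k_independent_le_alpha (S : {set T}) :
  k_independent e k S -> #|S| <= alpha_k e k.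
Proof. exact: (@leq_bigmax_cond _ (k_independent e k) (fun S0 => #|S0|)). Qed.

(* Every U contains a k-independent S such that each vertex of U \ S has at
   least k+1 neighbours in S: take S minimising
   deg_sum S + 2(k+1)|U \ S| + |S|; removing a vertex of degree > k from S, or
   adding a vertex with <= k neighbours in S, would decrease this quantity. *)
Lemma dominating_k_independent (U : {set T}) :
  exists2 S : {set T}, S \subset U /\ k_independent e k S &
    forall w, w \in U :\: S -> k.+1 <= deg_in e S w.
Proof.
pose mu (S : {set T}) := deg_sum e S + 2 * k.+1 * #|U :\: S| + #|S|.
have [S SU Smin] := @arg_minnP _ set0 (fun S => S \subset U) mu (sub0set U).
exists S; first split => //.
- apply/k_independentP => x xS; rewrite leqNgt; apply/negP => x_big.
  have /Smin : S :\ x \subset U by apply: subset_trans SU; apply: subsetDl.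
  have xU : x \in U by apply: (subsetP SU).
  have out_x : U :\: (S :\ x) = x |: (U :\: S).
    by apply/setP => y; rewrite !inE; case: (eqVneq y x) => [-> |].
  have := cardsD1 x S; rewrite xS => card_S.
  have := cardsU1 x (U :\: S); rewrite !inE xS /= -out_x => card_out.
  rewrite /mu (deg_sum_setD1 e_sym e_irr xS); lia.
- move=> w; rewrite inE => /andP [wS wU]; rewrite leqNgt; apply/negP => w_small.
  have /Smin : w |: S \subset U by rewrite subUset sub1set wU SU.
  have wS' : w \in w |: S by rewrite setU11.
  have del_w : (w |: S) :\ w = S by rewrite setU1K.
  have deg_w : deg_in e (w |: S) w = deg_in e S w.
    by rewrite (deg_in_setD1 e (w |: S) w w) del_w e_irr andbF addn0.
  have out_w : U :\: S = w |: (U :\: (w |: S)).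
    apply/setP => y; rewrite !inE; case: (eqVneq y w) => [-> |] //=.
    by rewrite wS wU.
  have card_out : #|U :\: S| = #|U :\: (w |: S)| + 1.
    by rewrite out_w cardsU1 !inE eqxx /= addnC.
  have card_S : #|w |: S| = #|S| + 1 by rewrite cardsU1 (negbTE wS) addnC.
  rewrite /mu (deg_sum_setD1 e_sym e_irr wS') del_w deg_w card_out card_S; lia.
Qed.

(* Lovasz-type bound: if all degrees in G[U] are below p(k+1), then U has a
   k-independent subset of size at least |U|/p.  Peel off the set given by
   [dominating_k_independent]; the rest has degrees below (p-1)(k+1). *)
Lemma k_independent_of_bounded_degree (p : nat) (U : {set T}) :
  (forall v, v \in U -> deg_in e U v < p * k.+1) ->
  exists2 S : {set T}, k_independent e k S & #|U| <= p * #|S|.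
Proof.
elim: p U => [|p IH] U deg_U.
  exists set0; first by apply/k_independentP => x; rewrite inE.
  have [-> | [v vU]] := set_0Vmem U; first by rewrite cards0.
  by have := deg_U v vU; rewrite mul0n.
have [S [SU S_ind] S_dom] := dominating_k_independent U.
have deg_rest v : v \in U :\: S -> deg_in e (U :\: S) v < p * k.+1.
  move=> vR; have /setDP [vU _] := vR.
  have := deg_U v vU; have := S_dom v vR.
  rewrite (deg_in_split e v SU) mulSn; lia.
have [S' S'_ind S'_big] := IH _ deg_rest.
have card_U : #|U| = #|S| + #|U :\: S|.
  by rewrite -(cardsID S U) (setIidPr SU).
have [le_S'S | lt_SS'] := leqP #|S'| #|S|.
- by exists S => //; rewrite mulSn; nia.
- by exists S' => //; rewrite mulSn; nia.
Qed.

(* Layering bound, by induction on L and then on |U|: a vertex of degree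
   >= (L+1)(k+1) is deleted (it pays for itself in deg_sum); otherwise
   |U| <= (L+1) alpha_k by the previous lemma and the bound for L applies. *)
Lemma layering_bound (L : nat) (U : {set T}) :
  2 * k.+1 * L * #|U| <= k.+1 * alpha_k e k * L * L.+1 + deg_sum e U.
Proof.
elim: L U => [|L IHL] U; first by rewrite !muln0 mul0n.
elim: {U}#|U| {-2}U (leqnn #|U|) => [|n IHn] U card_U.
  have -> : #|U| = 0 by lia.
  by rewrite muln0.
have [/exists_inP [v vU deg_v] | /exists_inPn no_big] :=
  boolP [exists v in U, L.+1 * k.+1 <= deg_in e U v].
- have := cardsD1 v U; rewrite vU => card_v.
  have := IHn (U :\ v) ltac:(lia).
  rewrite (deg_sum_setD1 e_sym e_irr vU); nia.
- have deg_U v : v \in U -> deg_in e U v < L.+1 * k.+1.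
    by move=> /no_big; rewrite ltnNge.
  have [S S_ind S_big] := k_independent_of_bounded_degree deg_U.
  have U_small : #|U| <= L.+1 * alpha_k e k.
    by apply: leq_trans S_big _; rewrite leq_mul2l k_independent_le_alpha ?orbT.
  have := IHL U; have := leq_mul (leqnn (2 * k.+1)) U_small; nia.
Qed.

End IndependentSets.

(* The quadratic (x - d)(x - d - c) is nonpositive on [d, d + c]. *)
Lemma quadratic_window (c d x : nat) :
  d <= x <= d + c -> x * (x + c) <= (d + c) * (2 * x - d).
Proof. move=> /andP [dx xdc]; nia. Qed.

(* The layering bound with L = d/c + 1, i.e. d < cL <= d + c, gives the
   Caro-Tuza type bound c n <= a (d + c). *)
Lemma layering_to_ratio (c d n a : nat) :
  0 < c -> 2 * c * (d %/ c).+1 * n <= c * a * (d %/ c).+1 * (d %/ c).+2 + d * n ->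
  c * n <= a * (d + c).
Proof.
move=> c_pos H; set L := (d %/ c).+1; set x := c * L.
have dx : d < x by rewrite /x mulnC ltn_ceil.
have xdc : x <= d + c by rewrite /x mulnC mulSn addnC leq_add2r leq_divM.
have key : c * n * (2 * x - d) <= a * (x * (x + c)).
  have H' := leq_mul (leqnn c) H.
  have -> : a * (x * (x + c)) = c * (c * a * L * L.+1) by rewrite /x; nia.
  nia.
have quad := @quadratic_window c d x; rewrite (ltnW dx) xdc in quad.
have pos : 0 < x * (x + c) by nia.
rewrite -(leq_pmul2r pos).
apply: (leq_trans (leq_mul (leqnn (c * n)) (quad isT))).
have := leq_mul key (leqnn (d + c)); nia.
Qed.

Lemma alpha_k_lower_bound (T : finType) (e : rel T) (k d : nat) :
  simple_graph e -> 2 * #|edges e| <= d * #|T| ->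
  k.+1 * #|T| <= alpha_k e k * (d + k.+1).
Proof.
move=> [e_sym e_irr] few_edges.
apply: layering_to_ratio => //.
have := layering_bound k e_sym e_irr (d %/ k.+1).+1 setT.
rewrite cardsT handshake //; lia.
Qed.

Section CompleteGraph.
Variable n : nat.

Definition complete : rel 'I_n := fun x y => x != y.

Lemma complete_simple : simple_graph complete.
Proof. by split => [x y | x]; rewrite /complete ?eqxx // eq_sym. Qed.

Lemma complete_edges : 2 * #|edges complete| = n * n.-1.
Proof.
have [e_sym e_irr] := complete_simple.
rewrite -handshake // /deg_sum (eq_bigr (fun _ => n.-1)).
  by rewrite sum_nat_const cardsT card_ord.
move=> x _; rewrite -[n in n.-1]card_ord -(cardsC1 x).
by apply: eq_card => y; rewrite !inE /complete eq_sym.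
Qed.

Lemma complete_alpha (k : nat) : alpha_k complete k <= k.+1.
Proof.
apply/bigmax_leqP => S /k_independentP S_ind.
have [-> | [x xS]] := set_0Vmem S; first by rewrite cards0.
have -> : #|S| = #|S :\ x|.+1 by rewrite (cardsD1 x S) xS.
suff <- : deg_in complete S x = #|S :\ x| by apply: S_ind.
by apply: eq_card => y; rewrite !inE /complete eq_sym andbC.
Qed.

End CompleteGraph.
Arguments complete : clear implicits.

Local Open Scope R_scope.

Lemma INR_lt0 (n : nat) : (0 < n)%N -> 0 < INR n.
Proof. by move=> /ltP; apply: lt_0_INR. Qed.

Lemma INR_leq (m n : nat) : (m <= n)%N -> INR m <= INR n.
Proof. by move/leP; apply: le_INR. Qed.

Lemma INR_muln (m n : nat) : INR (m * n) = INR m * INR n.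
Proof. by rewrite -mult_INR multE. Qed.

Lemma Rdiv_le_cross (a b c e : R) :
  0 < b -> 0 < e -> a * e <= c * b -> a / b <= c / e.
Proof.
move=> b_pos e_pos H; apply: (Rmult_le_reg_r (b * e)); first nra.
have -> : a / b * (b * e) = a * e by field; lra.
by have -> : c / e * (b * e) = c * b by field; lra.
Qed.

Lemma avg_degree_le (T : finType) (e : rel T) (d : nat) :
  (0 < nverts T)%N -> avg_degree e <= INR d -> (2 * #|edges e| <= d * #|T|)%N.
Proof.
rewrite /avg_degree => /INR_lt0 n_pos avg_le.
apply/leP/INR_le; rewrite !INR_muln.
have -> : INR 2 * INR #|edges e| = 2 * INR #|edges e| / INR (nverts T) * INR (nverts T).
  by simpl; field; lra.
by apply: Rmult_le_compat_r; lra.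
Qed.

Lemma ratio_lower (k d : nat) (r : R) :
  ratio_set k d r -> INR (k + 1) / INR (d + k + 1) <= r.
Proof.
move=> [T [e [e_simple [n_pos [avg_le ->]]]]].
have bound := alpha_k_lower_bound k e_simple (avg_degree_le n_pos avg_le).
apply: Rdiv_le_cross; try apply: INR_lt0; rewrite ?addn1 //.
rewrite -!INR_muln; apply: INR_leq; rewrite /nverts; nia.
Qed.

Lemma ratio_nonneg (k d : nat) (r : R) : ratio_set k d r -> 0 <= r.
Proof.
move=> [T [e [_ [n_pos [_ ->]]]]].
by apply: Rmult_le_pos; [exact: pos_INR | left; apply/Rinv_0_lt_compat/INR_lt0].
Qed.

Lemma complete_ratio (k d : nat) :
  ratio_set k d (INR (alpha_k (complete (d + 1)%N) k) / INR (d + 1)).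
Proof.
have n_pos : 0 < INR (d + 1) by apply: INR_lt0; rewrite addn1.
exists ('I_(d + 1) : finType), (complete (d + 1)%N); rewrite /nverts card_ord.
split; first exact: complete_simple.
split; first by rewrite addn1.
split => //.
rewrite /avg_degree /nverts card_ord.
have -> : 2 * INR #|edges (complete (d + 1)%N)| = INR (d + 1) * INR d.
  by rewrite -[2]/(INR 2) -!INR_muln complete_edges addn1 mulnC.
by apply: Req_le; field; lra.
Qed.

Lemma complete_ratio_upper (k d : nat) :
  INR (alpha_k (complete (d + 1)%N) k) / INR (d + 1) <= INR (k + 1) / INR (d + 1).
Proof.
apply: Rmult_le_compat_r.
  by left; apply/Rinv_0_lt_compat/INR_lt0; rewrite addn1.
by apply/INR_leq/(leq_trans (complete_alpha _ k)); rewrite addn1.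
Qed.

Lemma ratio_set_inf (k d : nat) : exists r, f_is k d r.
Proof.
pose E y := ratio_set k d (- y).
have E_bounded : bound E by exists 0 => y /ratio_nonneg; lra.
have E_inhabited : exists y, E y.
  by exists (- (INR (alpha_k (complete (d + 1)%N) k) / INR (d + 1)));
    rewrite /E Ropp_involutive; apply: complete_ratio.
have [m [m_ub m_lub]] := completeness E E_bounded E_inhabited.
exists (- m); split.
- move=> x Sx; have : E (- x) by rewrite /E Ropp_involutive.
  by move/m_ub; lra.
- move=> l l_lb; suff : m <= - l by lra.
  by apply: m_lub => y /l_lb; lra.
Qed.

Theorem mainTheorem8 (d k : nat) (hkd : (k <= d)%N) :
  exists r : R, f_is k d r /\
    Rle (Rdiv (INR (k + 1)) (INR (d + k + 1))) r /\
    Rle r (Rdiv (INR (k + 1)) (INR (d + 1))).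
Proof.
have [r [r_lb r_glb]] := ratio_set_inf k d.
exists r; split; first by split.
split.
- by apply: r_glb => x; apply: ratio_lower.
- apply: Rle_trans (r_lb _ (complete_ratio k d)) _.
  exact: complete_ratio_upper.
Qed.
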